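(* Let $W=\frac12(x^2-y^2)\partial_x+xy\partial_y$ on $\mathrm{SL}(2,\mathbb R)$. (1) The only $\mathcal N$-invariant $W$-translators are the surfaces $\Sigma_{\theta_0}$. (2) The only $\mathcal A$-invariant $W$-translators are the surfaces $\Sigma_{\theta_0}$. (3) Let $\Sigma$ be a rotational surface whose generating curve $\alpha(s)=(x(s),y(s))$ satisfies $x'=2y\cos\varphi$, $y'=2y\sin\varphi$. If $\Sigma$ is a $W$-translator, then $$\varphi'=(x-2)\cos\varphi-\frac{1}{2y}(x^2-y^2)\sin\varphi.$$
   Context: $\mathrm{SL}(2,\mathbb R)$ is given global coordinates $(x,y,\theta)\in\mathbb R\times(0,\infty)\times\mathbb R$ via $(x,y,\theta)\mapsto \begin{pmatrix}1&x\\0&1\end{pmatrix}\begin{pmatrix}\sqrt y&0\\0&1/\sqrt y\end{pmatrix}\begin{pmatrix}\cos\theta&\sin\theta\\-\sin\theta&\cos\theta\end{pmatrix}$, with the metric $\langle\,,\rangle=\frac{dx^2+dy^2}{4y^2}+\left(d\theta+\frac{dx}{2y}\right)^2$. Orthonormal frame: $e_1=2y\partial_x-\partial_\theta$, $e_2=2y\partial_y$, $e_3=\partial_\theta$; $W=\frac{1}{2y}\big(\frac12(x^2-y^2)e_1+xye_2+\frac12(x^2-y^2)e_3\big)$. A surface with unit normal $N$ and mean curvature $H$ (average of principal curvatures w.r.t. $N$) is a $W$-translator if $H=\langle N,W\rangle$. $\mathcal N$-invariant surfaces: parametrized as $(s,t)\mapsto(t,y(s),\theta(s))$; $N=\frac{y'}{\sqrt2\Phi}(e_1-e_3)+\frac{\sqrt2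 y\theta'}{\Phi}e_2$, $H=\frac{\sqrt2 y^2}{\Phi^3}(\theta'y''-y'\theta''+2y\theta'^3)$, $\Phi=\sqrt{y'^2+2y^2\theta'^2}$. $\mathcal A$-invariant surfaces: parametrized as $(s,t)\mapsto(x(s),t,\theta(s))$, $t>0$; $N=\frac1\Phi(-(x'+2t\theta')e_1+x'e_3)$, $H=\frac{2t^2}{\Phi^3}(x'\theta''-\theta'x'')$, $\Phi=\sqrt{(x'+2t\theta')^2+x'^2}$. Rotational surfaces: parametrized as $(s,t)\mapsto(x(s),y(s),t)$; when $x'=2y\cos\varphi$, $y'=2y\sin\varphi$, $N=-\sin\varphi\,e_1+\cos\varphi\,e_2$ and $H=\frac{\varphi'}{2}+\cos\varphi$. $\Sigma_{\theta_0}=\{\theta=\theta_0\}$ for a constant $\theta_0$. *)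

From Stdlib Require Import Reals.
From Coquelicot Require Import Coquelicot.
Open Scope R_scope.

(** Coordinates (x,y,theta) on SL(2,R), y > 0; orthonormal frame e1,e2,e3.
    Vectors are represented by their components in (e1,e2,e3). *)
Definition inner3 (a1 a2 a3 b1 b2 b3 : R) : R := a1 * b1 + a2 * b2 + a3 * b3.

Definition W1 (x y : R) : R := / (2 * y) * (/ 2 * (x ^ 2 - y ^ 2)).
Definition W2 (x y : R) : R := / (2 * y) * (x * y).
Definition W3 (x y : R) : R := / (2 * y) * (/ 2 * (x ^ 2 - y ^ 2)).

Definition in_I (a b : Rbar) (s : R) : Prop := Rbar_lt a s /\ Rbar_lt s b.

(** ---------- N-invariant surfaces (s,t) |-> (t, y(s), theta(s)) ---------- *)
Definition PhiN (y y1 th1 : R) : R := sqrt (y1 ^ 2 + 2 * y ^ 2 * th1 ^ 2).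
Definition NN1 (y y1 th1 : R) : R := y1 / (sqrt 2 * PhiN y y1 th1).
Definition NN2 (y y1 th1 : R) : R := sqrt 2 * y * th1 / PhiN y y1 th1.
Definition NN3 (y y1 th1 : R) : R := - (y1 / (sqrt 2 * PhiN y y1 th1)).
Definition HN (y y1 y2 th1 th2 : R) : R :=
  sqrt 2 * y ^ 2 / (PhiN y y1 th1) ^ 3 * (th1 * y2 - y1 * th2 + 2 * y * th1 ^ 3).

Definition N_translator (a b : Rbar) (y y1 y2 th1 th2 : R -> R) : Prop :=
  forall s t : R, in_I a b s ->
    HN (y s) (y1 s) (y2 s) (th1 s) (th2 s) =
    inner3 (NN1 (y s) (y1 s) (th1 s)) (NN2 (y s) (y1 s) (th1 s)) (NN3 (y s) (y1 s) (th1 s))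
           (W1 t (y s)) (W2 t (y s)) (W3 t (y s)).

(** ---------- A-invariant surfaces (s,t) |-> (x(s), t, theta(s)), t > 0 ---------- *)
Definition PhiA (t x1 th1 : R) : R := sqrt ((x1 + 2 * t * th1) ^ 2 + x1 ^ 2).
Definition NA1 (t x1 th1 : R) : R := - (x1 + 2 * t * th1) / PhiA t x1 th1.
Definition NA2 (t x1 th1 : R) : R := 0.
Definition NA3 (t x1 th1 : R) : R := x1 / PhiA t x1 th1.
Definition HA (t x1 x2 th1 th2 : R) : R :=
  2 * t ^ 2 / (PhiA t x1 th1) ^ 3 * (x1 * th2 - th1 * x2).

Definition A_translator (a b : Rbar) (x x1 x2 th1 th2 : R -> R) : Prop :=
  forall s t : R, in_I a b s -> 0 < t ->
    HA t (x1 s) (x2 s) (th1 s) (th2 s) =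
    inner3 (NA1 t (x1 s) (th1 s)) (NA2 t (x1 s) (th1 s)) (NA3 t (x1 s) (th1 s))
           (W1 (x s) t) (W2 (x s) t) (W3 (x s) t).

(** ---------- Rotational surfaces (s,t) |-> (x(s), y(s), t) ---------- *)
(* with x' = 2y cos phi, y' = 2y sin phi: N = -sin phi e1 + cos phi e2,
   H = phi'/2 + cos phi *)
Definition HR (ph ph1 : R) : R := ph1 / 2 + cos ph.

Definition R_translator (a b : Rbar) (x y ph ph1 : R -> R) : Prop :=
  forall s t : R, in_I a b s ->
    HR (ph s) (ph1 s) =
    inner3 (- sin (ph s)) (cos (ph s)) 0 (W1 (x s) (y s)) (W2 (x s) (y s)) (W3 (x s) (y s)).

(** In both invariant cases the translator equation must hold along every
    orbit, i.e. for every value of the orbit parameter [t], and this forces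
    [theta' = 0].  For [N]-invariant surfaces [H] does not depend on [t]
    while [<N, W>] is linear in [t] with slope proportional to [theta'].
    For [A]-invariant surfaces, clearing denominators gives a polynomial
    identity in [t] whose [t^4] coefficient is [-4 theta'^3].  Conversely,
    when [theta] is constant both sides vanish. *)

From Stdlib Require Import Reals Lra.
From Coquelicot Require Import Coquelicot.
Open Scope R_scope.

Lemma in_I_nonempty (a b : Rbar) : Rbar_lt a b -> exists s, in_I a b s.
Proof.
  unfold in_I; destruct a as [a| |], b as [b| |]; simpl; intros H; try contradiction.
  - exists ((a + b) / 2); lra.
  - exists (a + 1); lra.
  - exists (b - 1); lra.
  - exists 0; auto.
Qed.

Lemma in_I_between (a b : Rbar) (s1 s2 c : R) :
  in_I a b s1 -> in_I a b s2 -> s1 <= c <= s2 -> in_I a b c.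
Proof.
  unfold in_I; destruct a as [a| |], b as [b| |]; simpl; intros; lra.
Qed.

Lemma in_I_locally (a b : Rbar) (s : R) : in_I a b s -> locally s (in_I a b).
Proof.
  intros [Ha Hb].
  exact (filter_and _ _ (open_Rbar_gt' s a Ha) (open_Rbar_lt' s b Hb)).
Qed.

Lemma is_derive_const_on (a b : Rbar) (f : R -> R) (c s l : R) :
  in_I a b s -> (forall u, in_I a b u -> f u = c) -> is_derive f s l -> l = 0.
Proof.
  intros Hs Hc Hd.
  assert (Hd' : is_derive (fun _ => c) s l).
  { apply (is_derive_ext_loc f); [|exact Hd].
    apply (filter_imp (in_I a b)); [|exact (in_I_locally a b s Hs)].
    intros u Hu; apply Hc, Hu. }
  rewrite <- (is_derive_unique _ _ _ Hd'). apply Derive_const.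
Qed.

Lemma const_on_of_derive_zero (a b : Rbar) (f : R -> R) :
  (forall s, in_I a b s -> is_derive f s 0) ->
  forall s1 s2, in_I a b s1 -> in_I a b s2 -> f s1 = f s2.
Proof.
  intros Hd.
  assert (Hlt : forall s1 s2, s1 < s2 -> in_I a b s1 -> in_I a b s2 -> f s1 = f s2).
  { intros s1 s2 Hs12 H1 H2.
    destruct (MVT_cor2 f (fun _ => 0) s1 s2 Hs12) as [c [Hc _]].
    - intros c Hc. apply is_derive_Reals, Hd, (in_I_between a b s1 s2 c); auto.
    - simpl in Hc; lra. }
  intros s1 s2 H1 H2.
  destruct (Rtotal_order s1 s2) as [h|[h|h]].
  - auto.
  - subst; reflexivity.
  - symmetry; auto.
Qed.

Lemma const_on_iff_derive_zero (a b : Rbar) (f f1 : R -> R) :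
  Rbar_lt a b -> (forall s, in_I a b s -> is_derive f s (f1 s)) ->
  (exists c, forall s, in_I a b s -> f s = c) <-> (forall s, in_I a b s -> f1 s = 0).
Proof.
  intros Hab Hd. split.
  - intros [c Hc] s Hs. exact (is_derive_const_on a b f c s (f1 s) Hs Hc (Hd s Hs)).
  - intros Z. destruct (in_I_nonempty a b Hab) as [s0 H0].
    exists (f s0). intros s Hs.
    apply (const_on_of_derive_zero a b f); auto.
    intros u Hu. rewrite <- (Z u Hu). exact (Hd u Hu).
Qed.

Lemma NN_inner_W (t y y1 th1 : R) : 0 < y -> PhiN y y1 th1 <> 0 ->
  inner3 (NN1 y y1 th1) (NN2 y y1 th1) (NN3 y y1 th1) (W1 t y) (W2 t y) (W3 t y)
  = sqrt 2 * th1 * t * y / (2 * PhiN y y1 th1).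
Proof.
  intros Hy HP. unfold inner3, NN1, NN2, NN3, W1, W2, W3.
  assert (sqrt 2 <> 0) by (pose proof Rlt_sqrt2_0; lra).
  field. repeat split; lra.
Qed.

Lemma dtheta_eq_0_of_N_translator_at (y y1 y2 th1 th2 : R) : 0 < y -> PhiN y y1 th1 <> 0 ->
  (forall t, HN y y1 y2 th1 th2 =
    inner3 (NN1 y y1 th1) (NN2 y y1 th1) (NN3 y y1 th1) (W1 t y) (W2 t y) (W3 t y)) ->
  th1 = 0.
Proof.
  intros Hy HP H.
  pose proof (H 0) as E0. pose proof (H 1) as E1.
  rewrite NN_inner_W in E0, E1 by assumption.
  rewrite E0 in E1.
  assert (sqrt 2 <> 0) by (pose proof Rlt_sqrt2_0; lra).
  replace th1 with (sqrt 2 * th1 * 1 * y / (2 * PhiN y y1 th1) * (2 * PhiN y y1 th1) / (sqrt 2 * y))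
    by (field; repeat split; lra).
  rewrite <- E1. field. split; lra.
Qed.

Lemma N_translator_at_dtheta_0 (t y y1 y2 : R) : 0 < y -> PhiN y y1 0 <> 0 ->
  HN y y1 y2 0 0 = inner3 (NN1 y y1 0) (NN2 y y1 0) (NN3 y y1 0) (W1 t y) (W2 t y) (W3 t y).
Proof.
  intros Hy HP. rewrite NN_inner_W by assumption. unfold HN. field. exact HP.
Qed.

Lemma NA_inner_W (t x x1 th1 : R) : 0 < t -> PhiA t x1 th1 <> 0 ->
  inner3 (NA1 t x1 th1) (NA2 t x1 th1) (NA3 t x1 th1) (W1 x t) (W2 x t) (W3 x t)
  = - th1 * (x ^ 2 - t ^ 2) / (2 * PhiA t x1 th1).
Proof.
  intros Ht HP. unfold inner3, NA1, NA2, NA3, W1, W2, W3. field. split; lra.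
Qed.

Lemma A_translator_at_quartic (t x x1 x2 th1 th2 : R) : 0 < t -> PhiA t x1 th1 <> 0 ->
  HA t x1 x2 th1 th2 =
    inner3 (NA1 t x1 th1) (NA2 t x1 th1) (NA3 t x1 th1) (W1 x t) (W2 x t) (W3 x t) ->
  4 * t ^ 2 * (x1 * th2 - th1 * x2) + th1 * (x ^ 2 - t ^ 2) * ((x1 + 2 * t * th1) ^ 2 + x1 ^ 2) = 0.
Proof.
  intros Ht HP E.
  assert (HQ : PhiA t x1 th1 ^ 2 = (x1 + 2 * t * th1) ^ 2 + x1 ^ 2).
  { unfold PhiA. rewrite <- Rsqr_pow2. apply Rsqr_sqrt. nra. }
  rewrite <- HQ.
  replace (4 * t ^ 2 * (x1 * th2 - th1 * x2) + th1 * (x ^ 2 - t ^ 2) * PhiA t x1 th1 ^ 2)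
    with (2 * PhiA t x1 th1 ^ 3 *
          (HA t x1 x2 th1 th2 - - th1 * (x ^ 2 - t ^ 2) / (2 * PhiA t x1 th1)))
    by (unfold HA; field; exact HP).
  rewrite <- NA_inner_W, E by assumption. ring.
Qed.

Lemma dtheta_eq_0_of_quartic_vanishing (x x1 x2 th1 th2 : R) :
  (forall t, 0 < t ->
     4 * t ^ 2 * (x1 * th2 - th1 * x2) + th1 * (x ^ 2 - t ^ 2) * ((x1 + 2 * t * th1) ^ 2 + x1 ^ 2) = 0) ->
  th1 = 0.
Proof.
  intros H.
  set (P := fun t => 4 * t ^ 2 * (x1 * th2 - th1 * x2)
                     + th1 * (x ^ 2 - t ^ 2) * ((x1 + 2 * t * th1) ^ 2 + x1 ^ 2)).
  (* [P] is a quartic in [t] with leading coefficient [-4 th1^3]; its fourth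
     finite difference is [4! * (-4 th1^3)]. *)
  assert (Hdiff : -96 * th1 ^ 3 = P 5 - 4 * P 4 + 6 * P 3 - 4 * P 2 + P 1) by (unfold P; ring).
  unfold P in Hdiff. rewrite !H in Hdiff by lra.
  destruct (Req_dec th1 0) as [Z | NZ]; [exact Z |].
  exfalso. apply (pow_nonzero th1 3 NZ). lra.
Qed.

Lemma A_translator_at_dtheta_0 (t x x1 x2 : R) :
  HA t x1 x2 0 0 = inner3 (NA1 t x1 0) (NA2 t x1 0) (NA3 t x1 0) (W1 x t) (W2 x t) (W3 x t).
Proof.
  unfold HA, inner3, NA1, NA2, NA3, W1, W3, Rdiv. ring.
Qed.

Lemma N_invariant_translator_iff (a b : Rbar) (y y1 y2 th th1 th2 : R -> R) :
  Rbar_lt a b ->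
  (forall s, in_I a b s ->
     0 < y s /\ is_derive y s (y1 s) /\ is_derive y1 s (y2 s) /\
     is_derive th s (th1 s) /\ is_derive th1 s (th2 s) /\
     PhiN (y s) (y1 s) (th1 s) <> 0) ->
  N_translator a b y y1 y2 th1 th2 <-> exists th0 : R, forall s, in_I a b s -> th s = th0.
Proof.
  intros Hab Hs.
  rewrite (const_on_iff_derive_zero a b th th1 Hab) by (intros s Is; apply Hs, Is).
  split.
  - intros HT s Is. destruct (Hs s Is) as (Hy & _ & _ & _ & _ & HP).
    apply (dtheta_eq_0_of_N_translator_at (y s) (y1 s) (y2 s) (th1 s) (th2 s) Hy HP).
    intros t; apply HT, Is.
  - intros Z s t Is. destruct (Hs s Is) as (Hy & _ & _ & _ & D2 & HP).
    rewrite (is_derive_const_on a b th1 0 s (th2 s) Is Z D2), Z in * by exact Is.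
    apply N_translator_at_dtheta_0; assumption.
Qed.

Lemma A_invariant_translator_iff (a b : Rbar) (x x1 x2 th th1 th2 : R -> R) :
  Rbar_lt a b ->
  (forall s, in_I a b s ->
     is_derive x s (x1 s) /\ is_derive x1 s (x2 s) /\
     is_derive th s (th1 s) /\ is_derive th1 s (th2 s) /\
     (forall t, 0 < t -> PhiA t (x1 s) (th1 s) <> 0)) ->
  A_translator a b x x1 x2 th1 th2 <-> exists th0 : R, forall s, in_I a b s -> th s = th0.
Proof.
  intros Hab Hs.
  rewrite (const_on_iff_derive_zero a b th th1 Hab) by (intros s Is; apply Hs, Is).
  split.
  - intros HT s Is. destruct (Hs s Is) as (_ & _ & _ & _ & HP).
    apply (dtheta_eq_0_of_quartic_vanishing (x s) (x1 s) (x2 s) (th1 s) (th2 s)).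
    intros t Ht. apply A_translator_at_quartic; auto.
  - intros Z s t Is _. destruct (Hs s Is) as (_ & _ & _ & D2 & _).
    rewrite (is_derive_const_on a b th1 0 s (th2 s) Is Z D2), Z by exact Is.
    apply A_translator_at_dtheta_0.
Qed.

Lemma rotational_translator_dphi (x y ph1 phi : R) : 0 < y ->
  ph1 / 2 + cos phi = inner3 (- sin phi) (cos phi) 0 (W1 x y) (W2 x y) (W3 x y) ->
  ph1 = (x - 2) * cos phi - / (2 * y) * (x ^ 2 - y ^ 2) * sin phi.
Proof.
  intros Hy E. unfold inner3, W1, W2, W3 in E.
  replace ph1 with (2 * (ph1 / 2 + cos phi) - 2 * cos phi) by field.
  rewrite E. field. lra.
Qed.

Theorem mainTheorem5 :
  (* (1) N-invariant W-translators *)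
  (forall (a b : Rbar) (y y1 y2 th th1 th2 : R -> R),
     Rbar_lt a b ->
     (forall s, in_I a b s ->
        0 < y s /\ is_derive y s (y1 s) /\ is_derive y1 s (y2 s) /\
        is_derive th s (th1 s) /\ is_derive th1 s (th2 s) /\
        PhiN (y s) (y1 s) (th1 s) <> 0) ->
     (N_translator a b y y1 y2 th1 th2 <->
      exists th0 : R, forall s, in_I a b s -> th s = th0)) /\
  (* (2) A-invariant W-translators *)
  (forall (a b : Rbar) (x x1 x2 th th1 th2 : R -> R),
     Rbar_lt a b ->
     (forall s, in_I a b s ->
        is_derive x s (x1 s) /\ is_derive x1 s (x2 s) /\
        is_derive th s (th1 s) /\ is_derive th1 s (th2 s) /\
        (forall t, 0 < t -> PhiA t (x1 s) (th1 s) <> 0)) ->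
     (A_translator a b x x1 x2 th1 th2 <->
      exists th0 : R, forall s, in_I a b s -> th s = th0)) /\
  (* (3) rotational W-translators *)
  (forall (a b : Rbar) (x y ph ph1 : R -> R),
     Rbar_lt a b ->
     (forall s, in_I a b s ->
        0 < y s /\
        is_derive x s (2 * y s * cos (ph s)) /\
        is_derive y s (2 * y s * sin (ph s)) /\
        is_derive ph s (ph1 s)) ->
     R_translator a b x y ph ph1 ->
     forall s, in_I a b s ->
       ph1 s = (x s - 2) * cos (ph s) - / (2 * y s) * (x s ^ 2 - y s ^ 2) * sin (ph s)).
Proof.
  split; [exact N_invariant_translator_iff | split; [exact A_invariant_translator_iff |]].
  intros a b x y ph ph1 _ Hs HT s Is.
  apply rotational_translator_dphi; [apply Hs, Is | exact (HT s 0 Is)].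
Qed.
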